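(* Let $\mathcal{M}=(E,\rho)$ be a $q$-matroid and $V\le E$. Then \[ \mathrm{cyc}(V)=\sum_{C\le V,\ C\text{ a circuit of }\mathcal{M}} C . \] Thus $\mathrm{cyc}(V)$ is an open space and in fact the largest open space contained in $V$. As a consequence, $V$ is independent if and only if $\mathrm{cyc}(V)=0$.
   Context: Let $\mathbb{F}=\mathbb{F}_q$, $E$ a finite-dimensional $\mathbb{F}$-vector space. A $q$-matroid is $\mathcal{M}=(E,\rho)$ with $\rho$ from subspaces of $E$ to $\mathbb{Z}_{\ge0}$ satisfying $0\le\rho(V)\le\dim V$, monotonicity, and submodularity $\rho(V+W)+\rho(V\cap W)\le\rho(V)+\rho(W)$. $V$ is independent if $\rho(V)=\dim V$, dependent otherwise. A circuit is a dependent subspace all of whose proper subspaces are independent. A subspace is open if it is a sum of circuits (the empty sum being $0$). The cyclic core of $V$ is $\mathrm{cyc}(V)=\{x\in V\mid\rho(W)=\rho(V)\text{ for all }W\le V\text{ with }W+\langle x\rangle=V\}$. *)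

From HB Require Import structures.
From mathcomp Require Import all_boot all_order all_algebra.
Set Implicit Arguments. Unset Strict Implicit. Unset Printing Implicit Defensive.
Import GRing.Theory.
Local Open Scope ring_scope.

(* Over a finite field F, the subspaces of a finite-dimensional F-vector space
   form a finite type (subtype of a matrix type over a finite type). *)
Section FinVspace.
Import vector.VectorInternalTheory.
Variables (F : finFieldType) (vT : vectType F).
HB.instance Definition _ := [Countable of {vspace vT} by <:].
HB.instance Definition _ := [Finite of {vspace vT} by <:].
End FinVspace.

Section QMatroid.
Variables (F : finFieldType) (E : vectType F).

Definition is_qmatroid (rho : {vspace E} -> nat) : Prop :=
  [/\ (forall V, rho V <= \dim V)%N,
      (forall V W, (V <= W)%VS -> rho V <= rho W)%N &
      (forall V W, rho (V + W)%VS + rho (V :&: W)%VS <= rho V + rho W)%N].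

Variable rho : {vspace E} -> nat.

Definition indep (V : {vspace E}) : bool := rho V == \dim V.
Definition dependent (V : {vspace E}) : bool := ~~ indep V.

Definition circuit (C : {vspace E}) : bool :=
  dependent C && [forall D : {vspace E}, ((D <= C)%VS && (D != C)) ==> indep D].

Definition open_space (V : {vspace E}) : Prop :=
  exists s : seq {vspace E}, all circuit s /\ (\sum_(C <- s) C)%VS = V.

Definition cyc (V : {vspace E}) : pred E :=
  fun x => (x \in V) &&
    [forall W : {vspace E}, ((W <= V)%VS && ((W + <[x]>)%VS == V)) ==> (rho W == rho V)].

Definition circ_sum (V : {vspace E}) : {vspace E} :=
  (\sum_(C : {vspace E} | (C <= V)%VS && circuit C) C)%VS.

End QMatroid.

From HB Require Import structures.
From mathcomp Require Import all_boot all_order all_algebra.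
From mathcomp Require Import zify.
Set Implicit Arguments. Unset Strict Implicit. Unset Printing Implicit Defensive.
Import GRing.Theory.
Local Open Scope ring_scope.

(* For a hyperplane W of V, i.e. V = W + <[x]> with x \notin W, one has
   rho W = rho V exactly when some circuit of V is not contained in W: a
   circuit C with C + W = V meets W in an independent hyperplane of C, so
   submodularity forces rho V <= rho W; conversely, if rho W = rho V then
   adding x to a basis of W gives a dependent space whose circuits leave W.
   Hence x lies in the cyclic core of V iff no hyperplane of V avoiding x
   contains all circuits of V, i.e. iff x lies in their sum. *)

Lemma dimv_add_line (F : fieldType) (E : vectType F) (W : {vspace E}) (x : E) :
  x \notin W -> \dim (W + <[x]>)%VS = (\dim W).+1.
Proof.
move=> xW; have x0 : x != 0 by apply: contraNneq xW => ->; rewrite mem0v.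
have cap0 : (W :&: <[x]> = 0)%VS.
  apply/eqP; rewrite -subv0; apply/subvP => z /memv_capP[zW /vlineP[k zk]].
  rewrite memv0; apply/eqP; move: zW; rewrite zk.
  have [-> | k0] := eqVneq k 0; first by rewrite scale0r.
  by move=> /(memvZ k^-1); rewrite scalerA mulVf // scale1r (negbTE xW).
by rewrite dimv_disjoint_sum // dim_vline x0 addn1.
Qed.

Lemma hyperplane_exists (F : fieldType) (E : vectType F) (S V : {vspace E}) (x : E) :
  (S <= V)%VS -> x \in V -> x \notin S ->
  exists W : {vspace E}, [/\ (S <= W)%VS, x \notin W & (W + <[x]> = V)%VS].
Proof.
move=> SV xV xS; set T := (S + <[x]>)%VS; set K := (V :\: T)%VS.
have TV : (T <= V)%VS by rewrite subv_add SV -memvE.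
have WxV : (S + K + <[x]> = V)%VS.
  by rewrite -addvA (addvC K) addvA addvC addv_diff (addv_idPl TV).
have ltWV : (\dim (S + K) < \dim V)%N.
  have := dimv_cap_compl V T; rewrite (capv_idPr TV) dimv_add_line // -/K.
  have := dimv_sum_cap S K; lia.
exists (S + K)%VS; split=> //; first exact: addvSl.
apply: contraTN ltWV; rewrite memvE => /addv_idPl xWE.
by rewrite -WxV xWE ltnn.
Qed.

Section QMatroidTheory.
Variables (F : finFieldType) (E : vectType F) (rho : {vspace E} -> nat).

Lemma dependent_sub_circuit (D : {vspace E}) :
  dependent rho D -> exists2 C, (C <= D)%VS & circuit rho C.
Proof.
move=> dD; have DD : (D <= D)%VS && dependent rho D by rewrite subvv dD.
case: (@arg_minnP _ D (fun C => (C <= D)%VS && dependent rho C) (fun C => \dim C) DD)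
  => C /andP[CD dC] minC.
exists C; rewrite // /circuit dC; apply/forallP => D'; apply/implyP.
case/andP=> D'C D'neC; apply: contraR D'neC => dD'.
have /minC leCD' : (D' <= D)%VS && dependent rho D' by rewrite (subv_trans D'C CD).
by rewrite -(geq_leqif (dimv_leqif_eq D'C)).
Qed.

Lemma circ_sum_sub (V : {vspace E}) : (circ_sum rho V <= V)%VS.
Proof. by apply/subv_sumP => C /andP[]. Qed.

Lemma circuit_sub_circ_sum (V C : {vspace E}) :
  (C <= V)%VS -> circuit rho C -> (C <= circ_sum rho V)%VS.
Proof. by move=> CV cC; apply: (sumv_sup C) => //; rewrite CV cC. Qed.

Lemma circ_sum_open (V : {vspace E}) : open_space rho (circ_sum rho V).
Proof.
exists [seq C <- index_enum {vspace E} | (C <= V)%VS && circuit rho C].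
split; last by rewrite big_filter.
by apply/allP => C; rewrite mem_filter => /andP[/andP[_ ->]].
Qed.

Lemma open_sub_circ_sum (V W : {vspace E}) :
  open_space rho W -> (W <= V)%VS -> (W <= circ_sum rho V)%VS.
Proof.
move=> [s [circ_s <-]] sV; rewrite big_seq.
apply: (big_ind (fun X => (X <= circ_sum rho V)%VS)) => [|X Y XS YS|C Cs].
- exact: sub0v.
- by rewrite subv_add XS YS.
apply: circuit_sub_circ_sum; last exact: (allP circ_s).
by apply: subv_trans sV; rewrite (big_rem C Cs) addvSl.
Qed.

Hypothesis rho_qmatroid : is_qmatroid rho.

Let rho_le_dim (V : {vspace E}) : (rho V <= \dim V)%N.
Proof. by case: rho_qmatroid. Qed.

Let rhoS (V W : {vspace E}) : (V <= W)%VS -> (rho V <= rho W)%N.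
Proof. by case: rho_qmatroid => _ + _; apply. Qed.

Let rho_submod (V W : {vspace E}) : (rho (V + W)%VS + rho (V :&: W)%VS <= rho V + rho W)%N.
Proof. by case: rho_qmatroid. Qed.

Lemma rho_addv_le (A B : {vspace E}) : (rho (A + B)%VS <= rho A + \dim B)%N.
Proof. have := rho_submod A B; have := rho_le_dim B; lia. Qed.

Lemma indepS (J I : {vspace E}) : (J <= I)%VS -> indep rho I -> indep rho J.
Proof.
move=> JI /eqP rhoI; rewrite /indep eqn_leq rho_le_dim /=.
have := rho_addv_le J (I :\: J); rewrite addvC addv_diff (addv_idPl JI) rhoI.
by rewrite -(dimv_cap_compl I J) (capv_idPr JI) leq_add2r.
Qed.

Lemma indep0 : indep rho 0%VS.
Proof. by have := rho_le_dim 0%VS; rewrite /indep dimv0 leqn0. Qed.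

Lemma rho_addv_span (A : {vspace E}) (s : seq E) :
  (forall y, y \in s -> rho (A + <[y]>)%VS = rho A) -> rho (A + <<s>>)%VS = rho A.
Proof.
elim: s => [|y s IHs] rho_s; first by rewrite span_nil addv0.
have {IHs}rhoAs : rho (A + <<s>>)%VS = rho A.
  by apply: IHs => z zs; apply: rho_s; rewrite inE zs orbT.
have rhoAy := rho_s y (mem_head y s).
have Ays : ((A + <<s>>) + (A + <[y]>) = A + <<y :: s>>)%VS.
  rewrite addvA -(addvA A) (addvC <<s>>%VS A) addvA addvv -addvA.
  by rewrite (addvC <<s>>%VS) span_cons.
have := rho_submod (A + <<s>>)%VS (A + <[y]>)%VS; rewrite Ays rhoAs rhoAy.
have : (rho A <= rho ((A + <<s>>) :&: (A + <[y]>))%VS)%N.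
  by apply: rhoS; rewrite subv_cap !addvSl.
have : (rho A <= rho (A + <<y :: s>>))%N by apply/rhoS/addvSl.
lia.
Qed.

Lemma rho_basis_exists (W : {vspace E}) :
  exists B, [/\ (B <= W)%VS, indep rho B & rho B = rho W].
Proof.
have W0 : (0 <= W)%VS && indep rho 0%VS by rewrite sub0v indep0.
case: (@arg_maxnP _ 0%VS (fun C => (C <= W)%VS && indep rho C) (fun C => \dim C) W0)
  => B /andP[BW /eqP indepB] maxB.
exists B; split=> //; first exact/eqP.
rewrite -(addv_idPr BW) -(span_basis (vbasisP W)) rho_addv_span // => y /vbasis_mem yW.
have [yB | yB] := boolP (y \in B); first by rewrite (addv_idPl _) // -memvE.
have ByW : (B + <[y]> <= W)%VS by rewrite subv_add BW -memvE.
have : ~~ indep rho (B + <[y]>)%VS.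
  apply/negP => iBy; have := maxB _ (introT andP (conj ByW iBy)).
  by rewrite dimv_add_line //; lia.
have := rho_le_dim (B + <[y]>)%VS; have := rho_addv_le B <[y]>%VS.
have := rhoS (addvSl B <[y]>%VS).
by rewrite /indep dimv_add_line // dim_vline; case: (y != 0); lia.
Qed.

Lemma circuit_leaving_hyperplane (W : {vspace E}) (x : E) :
  x \notin W -> rho (W + <[x]>)%VS = rho W ->
  exists2 C, circuit rho C & (C <= W + <[x]>)%VS && ~~ (C <= W)%VS.
Proof.
move=> xW rhoWx; have [B [BW indepB rhoB]] := rho_basis_exists W.
set D := (B + <[x]>)%VS.
have xB : x \notin B by apply: contra xW; apply: subvP.
have DWx : (D <= W + <[x]>)%VS by rewrite subv_add (subv_trans BW (addvSl _ _)) addvSr.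
have dD : dependent rho D.
  apply/negP => /eqP; have := rhoS DWx; move/eqP: indepB.
  rewrite /D dimv_add_line // rhoWx -rhoB; lia.
have [C CD circC] := dependent_sub_circuit dD.
exists C; rewrite // (subv_trans CD DWx) /=; apply: contraL circC => CW.
have DWB : (D :&: W)%VS = B.
  apply/eqP; rewrite eq_sym eqEdim subv_cap addvSl BW -ltnS -(dimv_add_line xB) -/D.
  rewrite (ltn_leqif (dimv_leqif_eq (capvSl D W))); apply: contraNneq xW => DWD.
  by have /memv_capP[] : x \in (D :&: W)%VS by rewrite DWD memvE addvSr.
have CB : (C <= B)%VS by rewrite -DWB subv_cap CD CW.
by rewrite /circuit /dependent (indepS CB indepB).
Qed.

Lemma rho_hyperplane_eq_of_circuit (W C : {vspace E}) (x : E) :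
  circuit rho C -> (C <= W + <[x]>)%VS -> ~~ (C <= W)%VS ->
  rho W = rho (W + <[x]>)%VS.
Proof.
move=> /andP[dC /forallP properC] CWx CW.
have xW : x \notin W by apply: contra CW => xW; rewrite (addv_idPl _) -?memvE in CWx.
have CW_Wx : (C + W = W + <[x]>)%VS.
  apply/eqP; rewrite eqEdim subv_add CWx addvSl dimv_add_line //=.
  by rewrite (ltn_leqif (dimv_leqif_sup (addvSr C W))) subv_add subvv andbT.
have indepCW : indep rho (C :&: W)%VS.
  apply: (implyP (properC _)); rewrite capvSl /=.
  by apply: contra CW => /eqP/capv_idPl.
have := dimv_sum_cap C W; rewrite CW_Wx dimv_add_line //.
have := rho_submod C W; rewrite CW_Wx (eqP indepCW).
have := rho_le_dim C; have := rhoS (addvSl W <[x]>%VS).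
move: dC; rewrite /dependent /indep; lia.
Qed.

Lemma mem_cyc (V : {vspace E}) : cyc rho V =i circ_sum rho V.
Proof.
move=> x; rewrite unfold_in /cyc; apply/idP/idP.
  case/andP=> xV /forallP rho_hyp; apply: contraT => xS.
  have [W [SW xW WxV]] := hyperplane_exists (circ_sum_sub V) xV xS.
  have WV : (W <= V)%VS by rewrite -WxV addvSl.
  have /eqP rhoW := implyP (rho_hyp W) (introT andP (conj WV (introT eqP WxV))).
  have rhoWx : rho (W + <[x]>)%VS = rho W by rewrite WxV rhoW.
  have [C circC /andP[CWx CW]] := circuit_leaving_hyperplane xW rhoWx.
  rewrite WxV in CWx.
  by rewrite (subv_trans (circuit_sub_circ_sum CWx circC) SW) in CW.
move=> xS; rewrite (subvP (circ_sum_sub V) _ xS); apply/forallP => W.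
apply/implyP => /andP[WV /eqP WxV]; apply/eqP; rewrite -WxV.
have [xW | xW] := boolP (x \in W); first by rewrite (addv_idPl _) -?memvE.
have [C | noC] := pickP (fun C => [&& (C <= V)%VS, circuit rho C & ~~ (C <= W)%VS]).
  by case/and3P=> CV circC CW; apply: (rho_hyperplane_eq_of_circuit circC) => //; rewrite WxV.
suff SW : (circ_sum rho V <= W)%VS by rewrite (subvP SW) in xW.
by apply/subv_sumP => C /andP[CV circC]; have := noC C; rewrite CV circC => /negbFE.
Qed.

Lemma indep_circ_sum0 (V : {vspace E}) : indep rho V <-> circ_sum rho V = 0%VS.
Proof.
split=> [indepV | S0].
  apply/eqP; rewrite -subv0; apply/subv_sumP => C /andP[CV /andP[dC _]].
  by rewrite /dependent (indepS CV indepV) in dC.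
apply: contraTT isT => dV; have [C CV circC] := dependent_sub_circuit dV.
have := circuit_sub_circ_sum CV circC; rewrite S0 subv0 => /eqP C0.
by move: circC; rewrite C0 /circuit /dependent indep0.
Qed.

End QMatroidTheory.

Theorem theorem3p6 (F : finFieldType) (E : vectType F)
    (rho : {vspace E} -> nat) (Hq : is_qmatroid rho) (V : {vspace E}) :
  [/\ cyc rho V =i circ_sum rho V,
      open_space rho (circ_sum rho V),
      (forall W : {vspace E}, open_space rho W -> (W <= V)%VS ->
         (W <= circ_sum rho V)%VS) &
      (indep rho V <-> cyc rho V =i pred1 0)].
Proof.
have cycE := mem_cyc Hq V.
split=> //; [exact: circ_sum_open | exact: open_sub_circ_sum |].
rewrite indep_circ_sum0 //; split=> [S0 x | cyc0].
  by rewrite cycE S0 memv0.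
by apply/vspaceP => x; rewrite -cycE cyc0 memv0.
Qed.
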